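(* Let $\mathcal{H}$ be a Hilbert space of finite dimension $d$, let $\rho,\eta\in\mathcal{D}(\mathcal{H})$ be quantum states and let $0<s<1$. Then $\eta=\frac{\rho-s'\tau}{1-s'}$ for some real number $0<s'\le s$ and some state $\tau\in\mathcal{D}(\mathcal{H})$ if and only if $S_m\!\left(\frac1s\rho-\frac{1-s}{s}\eta\right)\ge0$ for all $m=1,2,\dots,d$.
   Context: $\mathcal{D}(\mathcal{H})$ is the set of density operators on $\mathcal{H}$. For a Hermitian operator $X$ on $\mathcal{H}$, define recursively $S_0(X)=1$ and $S_m(X)=\frac1m\sum_{l=1}^m(-1)^{l-1}\operatorname{tr}[X^l]\,S_{m-l}(X)$ for $m\ge1$. *)

(* finite-dimensional Hilbert space C^d modelled as
   column vectors over algC; operators are 'M[algC]_d. *)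
From HB Require Import structures.
From mathcomp Require Import all_boot all_order all_algebra all_field.
Set Implicit Arguments. Unset Strict Implicit. Unset Printing Implicit Defensive.
Import Order.TTheory GRing.Theory Num.Theory.
Local Open Scope ring_scope.

Definition adjmx (m n : nat) (A : 'M[algC]_(m, n)) : 'M[algC]_(n, m) :=
  map_mx (@Num.conj algC) A^T.

Definition psd (n : nat) (A : 'M[algC]_n) : Prop :=
  adjmx A = A /\ forall v : 'cV[algC]_n, 0 <= (adjmx v *m A *m v) 0 0.

Definition is_state (n : nat) (A : 'M[algC]_n) : Prop :=
  psd A /\ \tr A = 1.

(* Sseq X m = [:: S_0(X); ...; S_m(X)], with
   S_0 = 1, S_m = 1/m * sum_{l=1}^m (-1)^(l-1) tr[X^l] S_{m-l} *)
Fixpoint Sseq (n : nat) (X : 'M[algC]_n.+1) (m : nat) : seq algC :=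
  match m with
  | 0 => [:: 1]
  | m'.+1 =>
      let s := Sseq X m' in
      rcons s ((m'.+1)%:R^-1 *
        \sum_(1 <= l < m'.+2) (-1) ^+ l.+1 * \tr (X ^+ l) * nth 0 s (m'.+1 - l))
  end.

Definition Sfun (n : nat) (X : 'M[algC]_n.+1) (m : nat) : algC :=
  nth 0 (Sseq X m) m.

(* The operator X = (rho - (1 - s) eta) / s has trace 1, and the decomposition
   exists iff X is positive semidefinite: for s' = s take tau = X, and for
   s' < s, X = (s'/s) tau + (1 - s'/s) eta.  As X is Hermitian, the Newton
   identities identify S_m(X) with the m-th elementary symmetric function of
   its eigenvalues, and real numbers are all nonnegative iff their elementary
   symmetric functions are. *)
From HB Require Import structures.
From mathcomp Require Import all_boot all_order all_algebra all_field.
From mathcomp Require Import ring.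
Set Implicit Arguments. Unset Strict Implicit. Unset Printing Implicit Defensive.
Import Order.TTheory GRing.Theory Num.Theory.
Local Open Scope ring_scope.
Local Open Scope sesquilinear_scope.

Section NewtonIdentities.
Variable R : comNzRingType.
Implicit Types (x : R) (xs : seq R).

Definition esym_genpoly xs : {poly R} := \prod_(x <- xs) (1 + x%:P * 'X).

Definition power_sum xs (l : nat) : R := \sum_(x <- xs) x ^+ l.

Lemma coef_esym_genpoly_cons x xs k :
  (esym_genpoly (x :: xs))`_k = (esym_genpoly xs)`_k + x * ('X * esym_genpoly xs)`_k.
Proof. by rewrite /esym_genpoly big_cons mulrDl mul1r -mulrA coefD coefCM. Qed.

Lemma coef0_esym_genpoly xs : (esym_genpoly xs)`_0 = 1.
Proof.
elim: xs => [|x xs IH]; first by rewrite /esym_genpoly big_nil coefC.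
by rewrite coef_esym_genpoly_cons coefXM mulr0 addr0.
Qed.

Lemma coef_esym_genpoly_gt xs k : (size xs < k)%N -> (esym_genpoly xs)`_k = 0.
Proof.
elim: xs k => [|x xs IH] [|k] //=; first by rewrite /esym_genpoly big_nil coefC.
by rewrite ltnS => ltk; rewrite coef_esym_genpoly_cons coefXM /= !IH ?mulr0 ?addr0 // ltnW.
Qed.

Lemma sum_alternating_telescope (g : nat -> R) k :
  \sum_(1 <= l < k.+1) (-1) ^+ l.+1 * (g l + g l.+1) = g 1%N + (-1) ^+ k.+1 * g k.+1.
Proof.
elim: k => [|k IH]; first by rewrite big_geq // expr1 mulN1r subrr.
by rewrite big_nat_recr //= IH !exprS; ring.
Qed.

Definition newton_identities xs := forall k : nat,
  k%:R * (esym_genpoly xs)`_k =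
  \sum_(1 <= l < k.+1) (-1) ^+ l.+1 * power_sum xs l * (esym_genpoly xs)`_(k - l).

Lemma newton_identities_shift xs : newton_identities xs -> forall k : nat,
  \sum_(1 <= l < k.+1) (-1) ^+ l.+1 * power_sum xs l * ('X * esym_genpoly xs)`_(k - l)
  = k.-1%:R * ('X * esym_genpoly xs)`_k.
Proof.
move=> newton [|k]; first by rewrite big_geq // coefXM /= mulr0.
rewrite big_nat_recr //= subnn coefXM /= mulr0 addr0 coefXM /= newton.
by apply: eq_big_nat => l /andP[l_gt0 l_le_k]; rewrite coefXM subSn.
Qed.

Lemma newton_esym_genpoly xs : newton_identities xs.
Proof.
elim: xs => [|x xs IH] k.
  rewrite /esym_genpoly big_nil coefC.
  case: k => [|k]; first by rewrite mul0r big_geq.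
  by rewrite mulr0 big1 // => l _; rewrite /power_sum big_nil mulr0 mul0r.
set E := 'X * esym_genpoly xs.
have power_sum_cons l : power_sum (x :: xs) l = x ^+ l + power_sum xs l.
  by rewrite /power_sum big_cons.
rewrite coef_esym_genpoly_cons -/E.
(* Expanding both factors leaves the two sums of the induction hypotheses and a telescoping sum. *)
transitivity (\sum_(1 <= l < k.+1) (-1) ^+ l.+1 * power_sum xs l * (esym_genpoly xs)`_(k - l)
  + x * \sum_(1 <= l < k.+1) (-1) ^+ l.+1 * power_sum xs l * E`_(k - l)
  + \sum_(1 <= l < k.+1) (-1) ^+ l.+1 *
      (x ^+ l * E`_(k.+1 - l) + x ^+ l.+1 * E`_(k.+1 - l.+1))); last first.
  rewrite mulr_sumr -!big_split /=; apply: eq_big_nat => l /andP[l_gt0 l_le_k].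
  rewrite coef_esym_genpoly_cons power_sum_cons subSS [E`_(k.+1 - l)]coefXM subSn //=.
  by rewrite !exprS; ring.
rewrite (sum_alternating_telescope (fun l => x ^+ l * E`_(k.+1 - l))) subnn.
rewrite -IH newton_identities_shift // subn1 [E`_0]coefXM /= -/E !mulr0 addr0 expr1.
case: k => [|k]; first by rewrite coefXM /=; ring.
by rewrite /= mulrS; ring.
Qed.

End NewtonIdentities.

Lemma horner_gt0_of_coef_ge0 (R : numDomainType) (p : {poly R}) (t : R) :
  0 < p`_0 -> (forall i, 0 <= p`_i) -> 0 <= t -> 0 < p.[t].
Proof.
move=> p0_gt0 p_ge0 t_ge0; rewrite horner_coef.
have : (0 < size p)%N.
  by rewrite size_poly_gt0; apply: contraTneq p0_gt0 => ->; rewrite coef0 ltxx.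
case: (size p) => // k _; rewrite big_ord_recl /= expr0 mulr1 ltr_pwDl // sumr_ge0 // => i _.
by rewrite mulr_ge0 ?exprn_ge0.
Qed.

Section EsymSign.
Variable R : numFieldType.
Implicit Types (x : R) (xs : seq R).

Lemma coef_esym_genpoly_ge0 xs k :
  {in xs, forall x, 0 <= x} -> 0 <= (esym_genpoly xs)`_k.
Proof.
elim: xs k => [|x xs IH] k xs_ge0; first by rewrite /esym_genpoly big_nil coefC; case: k.
have xs_ge0' : {in xs, forall y, 0 <= y} by move=> y y_xs; rewrite xs_ge0 // inE y_xs orbT.
rewrite coef_esym_genpoly_cons coefXM addr_ge0 ?IH // mulr_ge0 //.
  exact: xs_ge0 (mem_head x xs).
by case: ifP => _; rewrite ?IH.
Qed.

Lemma root_esym_genpoly xs x : x \in xs -> x != 0 -> root (esym_genpoly xs) (- x^-1).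
Proof.
move=> x_xs x_neq0; rewrite /root /esym_genpoly horner_prod (big_rem x x_xs) /= !hornerE.
by rewrite mulrN mulfV // subrr mul0r.
Qed.

(* A negative element x would make -1/x a positive root of a polynomial with
   nonnegative coefficients and constant term 1. *)
Lemma esym_genpoly_ge0P xs : {in xs, forall x, x \is Num.real} ->
  {in xs, forall x, 0 <= x} <->
  (forall k, (1 <= k <= size xs)%N -> 0 <= (esym_genpoly xs)`_k).
Proof.
move=> xs_real; split=> [xs_ge0 k _|esym_ge0 x x_xs]; first exact: coef_esym_genpoly_ge0.
have coef_ge0 k : 0 <= (esym_genpoly xs)`_k.
  case: k => [|k]; first by rewrite coef0_esym_genpoly.
  by case: (leqP k.+1 (size xs)) => [k_le|/coef_esym_genpoly_gt ->]; first exact: esym_ge0.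
rewrite real_leNgt ?real0 ?xs_real //; apply/negP => x_lt0.
have /eqP := root_esym_genpoly x_xs (ltr0_neq0 x_lt0).
apply/eqP; rewrite gt_eqF // horner_gt0_of_coef_ge0 ?coef0_esym_genpoly //.
by rewrite oppr_ge0 invr_le0 ltW.
Qed.

End EsymSign.

Section NewtonTrace.
Variables (n : nat) (X : 'M[algC]_n.+1).

Lemma size_Sseq m : size (Sseq X m) = m.+1.
Proof. by elim: m => //= m IH; rewrite size_rcons IH. Qed.

Lemma nth_Sseq m j : (j <= m)%N -> nth 0 (Sseq X m) j = Sfun X j.
Proof.
elim: m => [|m IH]; first by rewrite leqn0 => /eqP ->.
rewrite leq_eqVlt => /orP[/eqP -> //|j_lt_m].
by rewrite /= nth_rcons size_Sseq j_lt_m IH.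
Qed.

Lemma Sfun_esym_genpoly (xs : seq algC) :
  (forall l, (0 < l)%N -> \tr (X ^+ l) = power_sum xs l) ->
  forall m, Sfun X m = (esym_genpoly xs)`_m.
Proof.
move=> tr_power_sum; elim/ltn_ind => -[_|m IH]; first by rewrite coef0_esym_genpoly.
rewrite /Sfun /= nth_rcons size_Sseq ltnn eqxx.
have m_neq0 : m.+1%:R != 0 :> algC by rewrite pnatr_eq0.
rewrite -[RHS](mulKf m_neq0) newton_esym_genpoly; congr (_ * _).
apply: eq_big_nat => l /andP[l_gt0 l_le_m].
have lt_m : (m.+1 - l < m.+1)%N by rewrite ltn_subrL l_gt0.
by rewrite tr_power_sum // nth_Sseq -1?ltnS // IH.
Qed.

End NewtonTrace.

Section Conjugation.
Variables (R : comUnitRingType) (n : nat) (P : 'M[R]_n).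
Hypothesis P_unit : P \in unitmx.

Lemma exp_conjmx (A : 'M[R]_n) l :
  (invmx P *m A *m P) ^+ l = invmx P *m A ^+ l *m P.
Proof.
elim: l => [|l IH]; first by rewrite !expr0 mulmx1 mulVmx.
by rewrite !exprSr IH -!mulmxE !mulmxA mulmxK.
Qed.

Lemma mxtrace_conjmx (A : 'M[R]_n) : \tr (invmx P *m A *m P) = \tr A.
Proof. by rewrite mxtrace_mulC mulmxA mulmxV // mul1mx. Qed.

End Conjugation.

Lemma exp_diag_mx (R : comPzSemiRingType) n (d : 'rV[R]_n) l :
  diag_mx d ^+ l = diag_mx (\row_i d 0 i ^+ l).
Proof.
elim: l => [|l IH]; first by apply/matrixP => i j; rewrite !mxE expr0.
by rewrite exprSr IH -mulmxE mulmx_diag; congr diag_mx; apply/rowP => i; rewrite !mxE exprSr.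
Qed.

Lemma adjmxM m n p (A : 'M[algC]_(m, n)) (B : 'M[algC]_(n, p)) :
  adjmx (A *m B) = adjmx B *m adjmx A.
Proof. by rewrite /adjmx trmx_mul map_mxM. Qed.

Section HermitianSpectrum.
Variables (n : nat) (X : 'M[algC]_n).
Hypothesis hermX : adjmx X = X.
Local Notation U := (spectralmx X).
Local Notation lam := (spectral_diag X).

Lemma hermsymmx_adjmx : X \is hermsymmx.
Proof. by apply/is_hermitianmxP; rewrite expr0 scale1r -[LHS]hermX. Qed.

Lemma hermitian_spectral_decomp : X = invmx U *m diag_mx lam *m U.
Proof. exact/orthomx_spectralP/hermitian_normalmx/hermsymmx_adjmx. Qed.

Lemma spectral_diag_real i : lam 0 i \is Num.real.
Proof. by have /mxOverP := hermitian_spectral_diag_real hermsymmx_adjmx; apply. Qed.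

Lemma mxtrace_exp_spectral l : \tr (X ^+ l) = \sum_i lam 0 i ^+ l.
Proof.
rewrite {1}hermitian_spectral_decomp exp_conjmx ?mxtrace_conjmx ?spectral_unit //.
by rewrite exp_diag_mx mxtrace_diag; apply: eq_bigr => i _; rewrite mxE.
Qed.

Lemma quadform_spectral (v : 'cV[algC]_n) :
  (adjmx v *m X *m v) 0 0 = \sum_i lam 0 i * `|(U *m v) i 0| ^+ 2.
Proof.
rewrite {1}hermitian_spectral_decomp invmx_unitary ?spectral_unitarymx //.
rewrite -[U ^t*]/(adjmx U) !mulmxA -adjmxM -mulmxA mxE.
by apply: eq_bigr => i _; rewrite mul_mx_diag !mxE normCK; ring.
Qed.

Lemma psd_spectral : psd X <-> forall i, 0 <= lam 0 i.
Proof.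
split=> [[_ quad_ge0] i|lam_ge0]; last first.
  split=> // v; rewrite quadform_spectral sumr_ge0 // => i _.
  by rewrite mulr_ge0 ?exprn_ge0.
pose e : 'cV[algC]_n := delta_mx i 0.
have := quad_ge0 (adjmx U *m e); rewrite quadform_spectral.
have -> : U *m (adjmx U *m e) = e.
  by rewrite mulmxA (unitarymxP (spectral_unitarymx X)) mul1mx.
rewrite (bigD1 i) //= big1 ?addr0 => [|j j_neq_i].
  by rewrite !mxE !eqxx normr1 expr1n mulr1.
by rewrite !mxE (negbTE j_neq_i) normr0 expr0n mulr0.
Qed.

End HermitianSpectrum.

Lemma psd_Sfun_ge0P n (X : 'M[algC]_n.+1) : adjmx X = X ->
  psd X <-> forall m, (1 <= m <= n.+1)%N -> 0 <= Sfun X m.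
Proof.
move=> hermX; set xs := [seq spectral_diag X 0 i | i <- enum 'I_n.+1].
have SfunE m : Sfun X m = (esym_genpoly xs)`_m.
  by apply: Sfun_esym_genpoly => l _; rewrite mxtrace_exp_spectral // /power_sum big_map big_enum.
have size_xs : size xs = n.+1 by rewrite size_map size_enum_ord.
have xs_real : {in xs, forall x, x \is Num.real}.
  by move=> x /mapP[i _ ->]; exact: spectral_diag_real.
rewrite psd_spectral //; transitivity {in xs, forall x, 0 <= x}.
  split=> [lam_ge0 x /mapP[i _ ->] // | xs_ge0 i].
  by apply: xs_ge0; rewrite map_f ?mem_enum.
rewrite esym_genpoly_ge0P // size_xs.
by split=> esym_ge0 m /esym_ge0; rewrite SfunE.
Qed.

Section PsdCone.
Variable n : nat.
Implicit Types (A B : 'M[algC]_n) (a : algC).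

Lemma adjmxD A B : adjmx (A + B) = adjmx A + adjmx B.
Proof. by rewrite /adjmx linearD map_mxD. Qed.

Lemma adjmxN A : adjmx (- A) = - adjmx A.
Proof. by rewrite /adjmx linearN map_mxN. Qed.

Lemma adjmxZ a A : a \is Num.real -> adjmx (a *: A) = a *: adjmx A.
Proof. by move=> a_real; apply/matrixP => i j; rewrite !mxE rmorphM /= conj_Creal. Qed.

Lemma psdD A B : psd A -> psd B -> psd (A + B).
Proof.
move=> [hermA quadA] [hermB quadB]; split=> [|v]; first by rewrite adjmxD hermA hermB.
by rewrite mulmxDr mulmxDl mxE addr_ge0.
Qed.

Lemma psdZ a A : 0 <= a -> psd A -> psd (a *: A).
Proof.
move=> a_ge0 [hermA quadA]; split=> [|v]; first by rewrite adjmxZ ?ger0_real ?hermA.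
by rewrite -scalemxAr -scalemxAl mxE mulr_ge0.
Qed.

End PsdCone.

Lemma state_decompositionP n (rho eta : 'M[algC]_n) (s : algC) :
  is_state rho -> is_state eta -> 0 < s < 1 ->
  (exists (s' : algC) (tau : 'M[algC]_n),
      [/\ 0 < s' <= s, is_state tau & eta = (1 - s')^-1 *: (rho - s' *: tau)])
  <-> psd (s^-1 *: rho - ((1 - s) / s) *: eta).
Proof.
move=> [rho_psd tr_rho] [eta_psd tr_eta] /andP[s_gt0 s_lt1].
have s_neq0 : s != 0 by rewrite gt_eqF.
split=> [[s' [tau [/andP[s'_gt0 s'_le_s] [tau_psd _] eta_def]]]|X_psd].
  have s'_neq1 : 1 - s' != 0 by rewrite gt_eqF // subr_gt0 (le_lt_trans s'_le_s).
  have rho_def : rho = (1 - s') *: eta + s' *: tau.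
    by rewrite eta_def scalerA divff // scale1r subrK.
  have -> : s^-1 *: rho - ((1 - s) / s) *: eta = (s' / s) *: tau + ((s - s') / s) *: eta.
    by rewrite rho_def; apply/matrixP => i j; rewrite !mxE; field.
  by apply: psdD; apply: psdZ => //; apply: divr_ge0; rewrite ?subr_ge0 // ltW.
exists s, (s^-1 *: rho - ((1 - s) / s) *: eta); split.
- by rewrite s_gt0 lexx.
- split=> //; rewrite mxtraceD mxtraceZ raddfN /= mxtraceZ tr_rho tr_eta; by field.
- have s_neq1 : 1 - s != 0 by rewrite gt_eqF // subr_gt0.
  by apply/matrixP => i j; rewrite !mxE; field; rewrite s_neq0 s_neq1.
Qed.

Theorem lemma9 (d : nat) (rho eta : 'M[algC]_d.+1) (s : algC) :
  is_state rho -> is_state eta -> 0 < s < 1 ->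
  (exists (s' : algC) (tau : 'M[algC]_d.+1),
      [/\ 0 < s' <= s, is_state tau & eta = (1 - s')^-1 *: (rho - s' *: tau)])
  <->
  (forall m : nat, (1 <= m <= d.+1)%N ->
     0 <= Sfun (s^-1 *: rho - ((1 - s) / s) *: eta) m).
Proof.
move=> rho_state eta_state s_range.
rewrite state_decompositionP // psd_Sfun_ge0P //.
have [[[rho_herm _] _] [[eta_herm _] _]] := (rho_state, eta_state).
have s_real : s \is Num.real by rewrite gtr0_real //; case/andP: s_range.
by rewrite adjmxD adjmxN !adjmxZ ?rho_herm ?eta_herm // ?rpredM ?rpredV ?rpredB ?real1.
Qed.
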